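(* Let $d\ge1$, $L\ge1$, $1\le q<d$. For every integer $T\ge(2L)^d$, $\mathbb{D}_{\mathrm{onl}}(\mathcal{H}_L)\ge(2L)^qT^{1-q/d}$ (with respect to the loss $\ell_q$). In particular $\mathbb{D}_{\mathrm{onl}}(\mathcal{H}_L)=\infty$.
   Context: $\mathcal{X}=[-1,1]^d$, $\mathcal{Y}=[0,1]$, $\mathcal{H}_L=\{h:\mathcal X\to[0,1]:|h(x)-h(x')|\le L\|x-x'\|_\infty\}$, loss $\ell_q(y,y')=|y-y'|^q$. Scaled Littlestone tree of depth $D\le\infty$: internal nodes $u\in\{0,1\}^{<D}$ labeled $x_u\in\mathcal X$, edges labeled $s_{u,0},s_{u,1}\in\mathcal{Y}$, gap $\gamma_u=\ell_q(s_{u,0},s_{u,1})$; realizable by $\mathcal{H}_L$ if for every branch $b$ and finite $n\le D$ some $h\in\mathcal{H}_L$ has $h(x_{b_{\le t}})=s_{b_{\le t},b_{t+1}}$ for $t<n$ ($b_{\le t}$ the length-$t$ prefix). $\mathbb{D}_{\mathrm{onl}}(\mathcal{H}_L)=\sup_{\mathcal T}\inf_b\sum_t\gamma_{b_{\le t}}$ over realizable trees and their branches. *)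

From HB Require Import structures.
From mathcomp Require Import all_boot all_order all_algebra.
From mathcomp Require Import all_classical all_reals all_analysis.
Set Implicit Arguments. Unset Strict Implicit. Unset Printing Implicit Defensive.
Import Order.TTheory GRing.Theory Num.Theory.
Local Open Scope classical_set_scope.
Local Open Scope ring_scope.

Section Defs.
Variables (R : realType) (d : nat).

Definition pt := 'I_d -> R.
Definition inX (x : pt) : Prop := forall i, -1 <= x i <= 1.
Definition inY (y : R) : Prop := 0 <= y <= 1.
Definition dist_inf (x x' : pt) : R := \big[Order.max/0]_(i < d) `|x i - x' i|.

Definition inHL (L : R) (h : pt -> R) : Prop :=
  (forall x, inX x -> inY (h x)) /\
  (forall x x', inX x -> inX x' -> `|h x - h x'| <= L * dist_inf x x').

Definition lossq (q : R) (y y' : R) : R := `|y - y'| `^ q.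

(* scaled Littlestone tree; depth None means D = oo.
   Nodes are bit sequences u with size u < D; node u is labelled x_u,
   edges out of u labelled s_{u,0}, s_{u,1}. *)
Record ltree := LTree {
  depth : option nat;
  node : seq bool -> pt;
  edge : seq bool -> bool -> R }.

Definition lt_depth (D : option nat) (k : nat) : Prop :=
  if D is Some n then (k < n)%N else True.
Definition le_depth (D : option nat) (k : nat) : Prop :=
  if D is Some n then (k <= n)%N else True.

Definition wf_tree (T : ltree) : Prop :=
  forall u, lt_depth (depth T) (size u) ->
    inX (node T u) /\ inY (edge T u false) /\ inY (edge T u true).

(* prefix b_{<= t} of length t of a branch b *)
Definition prefix (b : nat -> bool) (t : nat) : seq bool := mkseq b t.

Definition realizable (L : R) (T : ltree) : Prop :=
  forall (b : nat -> bool) (n : nat), le_depth (depth T) n ->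
    exists h, inHL L h /\
      forall t, (t < n)%N -> h (node T (prefix b t)) = edge T (prefix b t) (b t).

Definition gap (q : R) (T : ltree) (u : seq bool) : R :=
  lossq q (edge T u false) (edge T u true).

Definition branch_gain (q : R) (T : ltree) (b : nat -> bool) : \bar R :=
  match depth T with
  | Some n => (\sum_(t < n) gap q T (prefix b t))%:E
  | None => (\sum_(0 <= t <oo) (gap q T (prefix b t))%:E)%E
  end.

Definition D_onl (L q : R) : \bar R :=
  ereal_sup [set ereal_inf [set branch_gain q T b | b in [set: nat -> bool]]
            | T in [set T | wf_tree T /\ realizable L T]].

End Defs.

(* The grid {-1 + 2j/k : 0 <= j <= k}^d has (k+1)^d points at pairwise sup-distance
   at least 2/k. Enumerating them along the depth of a tree, with edge labels 0 and
   L/k at every node, gives a realizable tree: for any branch, the maximum of the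
   L-Lipschitz cones of height L/k centred at the points where the branch went right
   realizes it, because each cone vanishes at every other grid point. Every
   branch of this tree gains (k+1)^d (L/k)^q >= k^(d-q), which is unbounded in k as
   q < d; hence D_onl(H_L) = +oo and every finite lower bound holds. *)
From HB Require Import structures.
From mathcomp Require Import all_boot all_order all_algebra.
From mathcomp Require Import all_classical all_reals all_analysis.
From mathcomp Require Import ring lra.
Set Implicit Arguments. Unset Strict Implicit. Unset Printing Implicit Defensive.
Import Order.TTheory GRing.Theory Num.Theory.
Local Open Scope classical_set_scope.
Local Open Scope ring_scope.

Lemma dist_max (R : realDomainType) (a1 a2 b1 b2 c : R) :
  `|a1 - b1| <= c -> `|a2 - b2| <= c ->
  `|Order.max a1 a2 - Order.max b1 b2| <= c.
Proof.
rewrite !ler_norml => /andP[h1 h2] /andP[h3 h4].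
rewrite !maxEle; case: (leP a1 a2) => ha; case: (leP b1 b2) => hb;
  apply/andP; split; lra.
Qed.

Lemma dist_bigmax (R : realDomainType) (I : Type) (r : seq I) (P : pred I)
    (f g : I -> R) (c : R) :
  0 <= c -> (forall i, P i -> `|f i - g i| <= c) ->
  `|\big[Order.max/0]_(i <- r | P i) f i - \big[Order.max/0]_(i <- r | P i) g i|
    <= c.
Proof.
move=> c0 fg; apply: (big_ind2 (fun a b => `|a - b| <= c)) => //.
  by rewrite subrr normr0.
by move=> a1 b1 a2 b2; apply: dist_max.
Qed.

Lemma ler1_distn (R : numDomainType) (a b : nat) : a != b -> 1 <= `|a%:R - b%:R : R|.
Proof.
case: (ltngtP a b) => // ab _; last by rewrite -natrB ?(ltnW ab) // normr_nat ler1n subn_gt0.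
by rewrite distrC -natrB ?(ltnW ab) // normr_nat ler1n subn_gt0.
Qed.

Section SupDistance.
Variables (R : realType) (d : nat).
Implicit Types (x y z : pt R d).

Lemma dist_inf_ge0 x y : 0 <= dist_inf x y.
Proof. by rewrite /dist_inf; elim/big_ind: _ => // a b ha hb; rewrite le_max ha. Qed.

Lemma ler_dist_inf x y i : `|x i - y i| <= dist_inf x y.
Proof. exact: le_bigmax. Qed.

Lemma dist_inf_le x y c : 0 <= c -> (forall i, `|x i - y i| <= c) ->
  dist_inf x y <= c.
Proof. by move=> c0 xy; apply: bigmax_le. Qed.

Lemma dist_infC x y : dist_inf x y = dist_inf y x.
Proof. by apply: eq_bigr => i _; rewrite distrC. Qed.

Lemma dist_inf_triangle x y z : dist_inf x z <= dist_inf x y + dist_inf y z.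
Proof.
apply: dist_inf_le => [|i]; first by rewrite addr_ge0 ?dist_inf_ge0.
by apply: le_trans (ler_distD (y i) _ _) _; apply: lerD; apply: ler_dist_inf.
Qed.

Lemma dist_infxx x : dist_inf x x = 0.
Proof.
apply/le_anti; rewrite dist_inf_ge0 andbT.
by apply: dist_inf_le => // i; rewrite subrr normr0.
Qed.

End SupDistance.

Section Cone.
Variables (R : realType) (d : nat) (L e : R) (p : pt R d).
Hypotheses (L_ge0 : 0 <= L) (e_ge0 : 0 <= e).

Definition cone (x : pt R d) : R := Order.max 0 (e - L * dist_inf x p).

Lemma cone_lipschitz x x' : `|cone x - cone x'| <= L * dist_inf x x'.
Proof.
apply: dist_max; first by rewrite subrr normr0 mulr_ge0 ?dist_inf_ge0.
have -> : e - L * dist_inf x p - (e - L * dist_inf x' p) =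
    L * (dist_inf x' p - dist_inf x p) by ring.
rewrite normrM ger0_norm //; apply: ler_wpM2l => //.
have t1 := dist_inf_triangle x x' p; have t2 := dist_inf_triangle x' x p.
rewrite (dist_infC x' x) in t2; rewrite ler_norml; apply/andP; split; lra.
Qed.

Lemma cone_ge0 x : 0 <= cone x.
Proof. by rewrite le_max lexx. Qed.

Lemma cone_le x : cone x <= e.
Proof. by rewrite ge_max e_ge0 gerBl mulr_ge0 ?dist_inf_ge0. Qed.

Lemma cone_center : cone p = e.
Proof. by rewrite /cone dist_infxx mulr0 subr0 max_r. Qed.

Lemma cone_outside x : e <= L * dist_inf x p -> cone x = 0.
Proof. by move=> far; rewrite /cone max_l // subr_le0. Qed.

End Cone.

Section PackingTree.
Variables (R : realType) (d : nat) (L e : R) (ps : seq (pt R d)).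
Hypotheses (L_ge0 : 0 <= L) (e_ge0 : 0 <= e) (e_le1 : e <= 1).
Hypothesis ps_inX : forall p, p \in ps -> inX p.
(* [nth] needs a default point; it is never read at a tree node. *)
Let pnt (i : nat) : pt R d := nth (fun=> 0) ps i.
Hypothesis ps_separated : forall i j, (i < size ps)%N -> (j < size ps)%N ->
  i != j -> e <= L * dist_inf (pnt i) (pnt j).

Definition packing_tree : ltree R d :=
  LTree (Some (size ps)) (fun u => pnt (size u)) (fun _ right => if right then e else 0).

Definition cone_selector (b : nat -> bool) (n : nat) (x : pt R d) : R :=
  \big[Order.max/0]_(t < n) (if b t then cone L e (pnt t) x else 0).

Lemma cone_selector_HL b n : inHL L (cone_selector b n).
Proof.
split=> [x _ | x x' _ _].
  apply/andP; split.
    rewrite /cone_selector; elim/big_ind: _ => // [a c ha _|t _].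
      by rewrite le_max ha.
    by case: (b t); rewrite ?cone_ge0.
  apply: bigmax_le => // t _; case: (b t) => //.
  by apply: le_trans e_le1; apply: cone_le.
apply: dist_bigmax => [|t _]; first by rewrite mulr_ge0 ?dist_inf_ge0.
case: (b t); last by rewrite subrr normr0 mulr_ge0 ?dist_inf_ge0.
exact: cone_lipschitz.
Qed.

Lemma cone_selector_at b n s : (s < n)%N -> (n <= size ps)%N ->
  cone_selector b n (pnt s) = if b s then e else 0.
Proof.
move=> sn nps; have ce : cone L e (pnt s) (pnt s) = e by apply: cone_center.
apply/le_anti/andP; split.
  apply: bigmax_le => [|t _]; first by case: (b s).
  have [->|ts] := eqVneq (val t) s; first by case: (b s); rewrite ?ce.
  case: (b t); last by case: (b s).
  rewrite cone_outside; first by case: (b s).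
  by rewrite dist_infC ps_separated // ?(leq_trans _ nps) // eq_sym.
apply: le_trans (le_bigmax _ _ (Ordinal sn)) => /=.
by case: (b s); rewrite ?ce.
Qed.

Lemma packing_tree_wf : wf_tree packing_tree.
Proof.
move=> u /= lt_u; split; first by apply: ps_inX; rewrite mem_nth.
by rewrite /inY lexx ler01 e_ge0 e_le1.
Qed.

Lemma packing_tree_realizable : realizable L packing_tree.
Proof.
move=> b n /= nps; exists (cone_selector b n); split; first exact: cone_selector_HL.
by move=> t tn; rewrite /prefix size_mkseq cone_selector_at.
Qed.

Lemma packing_tree_gain q b :
  branch_gain q packing_tree b = ((size ps)%:R * e `^ q)%:E.
Proof.
rewrite /branch_gain /= (eq_bigr (fun _ => e `^ q)) ?sumr_const ?card_ord ?mulr_natl //.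
by move=> t _; rewrite /gap /lossq /= sub0r normrN ger0_norm.
Qed.

End PackingTree.

Lemma D_onl_ge (R : realType) (d : nat) (L q M : R) (T : ltree R d) :
  wf_tree T -> realizable L T -> (forall b, (M%:E <= branch_gain q T b)%E) ->
  (M%:E <= D_onl d L q)%E.
Proof.
move=> wfT realT gainT; apply: le_trans (ereal_sup_ubound _); last by exists T.
by apply/ereal_infP => _ [b _ <-].
Qed.

Section Grid.
Variables (R : realType) (d k : nat).
Hypothesis k_gt0 : (0 < k)%N.

Let k_pos : 0 < k%:R :> R. Proof. by rewrite ltr0n. Qed.

Definition grid_point (f : {ffun 'I_d -> 'I_k.+1}) : pt R d :=
  fun i => -1 + 2 * (f i)%:R / k%:R.

Definition grid : seq (pt R d) := map grid_point (enum {ffun 'I_d -> 'I_k.+1}).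

Lemma size_grid : size grid = (k.+1 ^ d)%N.
Proof. by rewrite size_map -cardE card_ffun !card_ord. Qed.

Lemma grid_point_inX f : inX (grid_point f).
Proof.
move=> i; have lo : 0 <= 2 * (f i)%:R / k%:R :> R by rewrite divr_ge0 ?mulr_ge0.
have hi : 2 * (f i)%:R / k%:R <= 2 :> R.
  by rewrite ler_pdivrMr // ler_wpM2l // ler_nat -ltnS.
by rewrite /grid_point; apply/andP; split; lra.
Qed.

Lemma grid_point_sep f g : f != g -> 2 / k%:R <= dist_inf (grid_point f) (grid_point g).
Proof.
move=> fg; have [i fgi] : exists i, f i != g i.
  apply/existsP; apply: contraR fg => /existsPn eq_fg.
  by apply/eqP/ffunP => i; apply/eqP/negPn.
apply: le_trans (ler_dist_inf _ _ i); rewrite /grid_point.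
have -> : -1 + 2 * (f i)%:R / k%:R - (-1 + 2 * (g i)%:R / k%:R) =
    2 / k%:R * ((f i)%:R - (g i)%:R) :> R by field; rewrite gt_eqF.
rewrite normrM ger0_norm ?divr_ge0 // ler_peMr ?divr_ge0 //.
by apply: ler1_distn; rewrite (inj_eq val_inj).
Qed.

Lemma grid_separated (L : R) : 0 <= L -> forall i j,
  (i < size grid)%N -> (j < size grid)%N -> i != j ->
  L / k%:R <= L * dist_inf (nth (fun=> 0) grid i) (nth (fun=> 0) grid j).
Proof.
move=> L_ge0 i j; rewrite size_map enumT => ilt jlt ij.
rewrite !(nth_map [ffun=> ord0]) ?enumT //.
apply: le_trans (ler_wpM2l L_ge0 (grid_point_sep _)); last first.
  by rewrite nth_uniq // -enumT enum_uniq.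
by rewrite mulrA ler_pM2r ?invr_gt0 // ler_peMr // ler1n.
Qed.

Lemma grid_gain_ge (L q : R) : 1 <= L -> 0 <= q ->
  k%:R `^ (d%:R - q) <= (size grid)%:R * (L / k%:R) `^ q.
Proof.
move=> L_ge1 q_ge0; rewrite powRD ?pnatr_eq0 -?lt0n ?k_gt0 ?implybT // size_grid.
apply: ler_pM; rewrite ?powR_ge0 //.
  by rewrite powR_mulrn // -natrX ler_nat; elim: d => // n IH; rewrite !expnS leq_mul.
rewrite -mulN1r powRrM; apply: ge0_ler_powR; rewrite ?nnegrE ?powR_ge0 ?divr_ge0 //.
  exact: le_trans L_ge1.
by rewrite powRN powRr1 ?ler0n // ler_pdivlMr // mulVf ?gt_eqF.
Qed.

End Grid.

Lemma D_onl_ge_grid (R : realType) (d k : nat) (L q : R) :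
  (0 < k)%N -> 1 <= L -> L <= k%:R -> 0 <= q ->
  ((k%:R `^ (d%:R - q))%:E <= D_onl d L q)%E.
Proof.
move=> k_gt0 L_ge1 Lk q_ge0.
have L_ge0 : 0 <= L := le_trans ler01 L_ge1.
have e_ge0 : 0 <= L / k%:R by rewrite divr_ge0.
have e_le1 : L / k%:R <= 1 by rewrite ler_pdivrMr ?ltr0n // mul1r.
have grid_inX : forall p, p \in grid R d k -> inX p.
  by move=> _ /mapP[f _ ->]; apply: grid_point_inX.
have grid_sep := @grid_separated R d k k_gt0 L L_ge0.
apply: (D_onl_ge (packing_tree_wf e_ge0 e_le1 grid_inX)
                 (packing_tree_realizable L_ge0 e_ge0 e_le1 grid_sep)) => b.
by rewrite packing_tree_gain // lee_fin grid_gain_ge.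
Qed.

Theorem theoremA8 (R : realType) (d : nat) (L q : R) :
  (1 <= d)%N -> 1 <= L -> 1 <= q -> q < d%:R ->
  (forall T : nat, (2 * L) `^ d%:R <= T%:R ->
     (((2 * L) `^ q * T%:R `^ (1 - q / d%:R))%:E <= D_onl d L q)%E)
  /\ D_onl d L q = +oo%E.
Proof.
move=> _ L_ge1 q_ge1 qd.
suff D_inf : D_onl d L q = +oo%E by split=> // T _; rewrite D_inf leey.
apply/eqyP => M M_gt0.
have r_gt0 : 0 < d%:R - q by rewrite subr_gt0.
set A := M `^ (d%:R - q)^-1.
have A_ge0 : 0 <= A by rewrite powR_ge0.
have L_ge0 : 0 <= L := le_trans ler01 L_ge1.
pose k := Num.Def.archi_bound (A + L).
have AL_lt_k : A + L < k%:R by apply: archi_boundP; rewrite addr_ge0.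
have Lk : L <= k%:R by apply/ltW/(le_lt_trans _ AL_lt_k); rewrite lerDr.
have Ak : A <= k%:R by apply/ltW/(le_lt_trans _ AL_lt_k); rewrite lerDl.
have k_gt0 : (0 < k)%N by rewrite -(ltr0n R) (lt_le_trans ltr01) ?(le_trans L_ge1).
apply: le_trans (D_onl_ge_grid d k_gt0 L_ge1 Lk (le_trans ler01 q_ge1)).
have -> : M = A `^ (d%:R - q) by rewrite /A -powRrM mulVf ?gt_eqF // powRr1 // ltW.
rewrite lee_fin; apply: ge0_ler_powR; rewrite ?nnegrE ?ler0n //; exact: ltW.
Qed.
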